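(* For every large enough $n$, there exist an unweighted $n$-vertex graph $G$ and a spectral sparsifier $H$ of $G$ such that $\widehat{H}$, the unweighted version of $H$, has stretch $\widetilde{\Omega}(n^{2/3})$ with respect to $G$, i.e., there are $u,v$ with $d_{\widehat{H}}(u,v)\ge\widetilde{\Omega}(n^{2/3})\cdot d_G(u,v)$.
   Context: A spectral sparsifier of $G=(V,E)$ is a $(1\pm\varepsilon)$-spectral sparsifier for a fixed small constant $\varepsilon>0$: a weighted graph $H=(V,E_H,w)$ with $E_H\subseteq E$ and positive weights such that $(1-\varepsilon)L_H\preceq L_G\preceq(1+\varepsilon)L_H$, where $L$ denotes the (weighted) graph Laplacian and $A\preceq B$ means $x^\top Ax\le x^\top Bx$ for all $x$. $\widehat{H}$ is $(V,E_H)$ with all weights equal to $1$; $d$ denotes shortest-path distance. $\widetilde{\Omega}(f)$ means $f/\mathrm{polylog}(n)$. *)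

From HB Require Import structures.
From mathcomp Require Import all_boot all_order all_algebra.
From mathcomp Require Import all_classical all_reals all_analysis.
Set Implicit Arguments. Unset Strict Implicit. Unset Printing Implicit Defensive.
Import Order.TTheory GRing.Theory Num.Theory.
Local Open Scope ring_scope.

Section Graphs.
Variable R : realType.
Variable n : nat.
Implicit Types (e : rel 'I_n) (w : 'I_n -> 'I_n -> R).

Definition simple_graph e := symmetric e /\ irreflexive e.

(* Weighted Laplacian of the graph with edge relation e and edge weights w:
   L = sum over edges {i,j} of w_ij (e_i - e_j)(e_i - e_j)^T. *)
Definition laplacian e w : 'M[R]_n :=
  \matrix_(i, j) (if i == j then \sum_(k | e i k) w i k
                  else if e i j then - w i j else 0).

Definition loewner_le (A B : 'M[R]_n) : Prop :=
  forall x : 'cV[R]_n, (x^T *m A *m x) 0 0 <= (x^T *m B *m x) 0 0.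

Definition spectral_sparsifier (eps : R) (G EH : rel 'I_n) w : Prop :=
  [/\ symmetric EH, subrel EH G,
      (forall i j, EH i j -> 0 < w i j),
      (forall i j, w i j = w j i) &
      loewner_le ((1 - eps) *: laplacian EH w) (laplacian G (fun _ _ => 1)) /\
      loewner_le (laplacian G (fun _ _ => 1)) ((1 + eps) *: laplacian EH w)].

End Graphs.

Fixpoint walk (T : finType) (e : rel T) (k : nat) (u v : T) : bool :=
  if k is k'.+1 then [exists w, e u w && walk e k' w v] else u == v.

(* Shortest-path distance in the unweighted graph e (+oo if unreachable).
   A shortest walk, if any, has fewer than #|T| edges. *)
Definition dist (R : realType) (T : finType) (e : rel T) (u v : T) : \bar R :=
  if [seq k <- iota 0 #|T| | walk e k u v] is k :: _ then ((k%:R : R)%:E)%E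
  else (+oo)%E.

From HB Require Import structures.
From mathcomp Require Import all_boot all_order all_algebra.
From mathcomp Require Import all_classical all_reals all_analysis.
From mathcomp Require Import ring lra zify.
Set Implicit Arguments. Unset Strict Implicit. Unset Printing Implicit Defensive.
Import Order.TTheory GRing.Theory Num.Theory.
Local Open Scope ring_scope.

(* Join L + 1 layers of m vertices each by complete bipartite graphs between
   consecutive layers, and let G be this graph H plus one edge st from the
   first to the last layer.  Then d_G(s,t) = 1 while d_H(s,t) >= L, and H is a
   (1 +- eps)-sparsifier of G as soon as the extra edge is spectrally small:
   (x_s - x_t)^2 <= eps x^T L_H x.  Comparing x_s and x_t with the layer sums
   of x and applying Cauchy-Schwarz gives
   m^2 (x_s - x_t)^2 <= 6 (m + L) x^T L_H x, so 6 (m + L) <= eps m^2 suffices.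
   Taking m = A t and L = t^2 for a constant A depending on eps, the graph has
   about 2 A t^3 = n vertices and stretch t^2, of order n^(2/3). *)

Section SumOfSquares.
Variables (R : realType) (I : Type) (r : seq I) (P : pred I).

Lemma sqr_sum_le (y : I -> R) :
  (\sum_(i <- r | P i) y i) ^+ 2 <=
  (\sum_(i <- r | P i) 1) * \sum_(i <- r | P i) y i ^+ 2.
Proof.
have pair_sum : \sum_(i <- r | P i) \sum_(j <- r | P j) (y i - y j) ^+ 2 =
    2 * ((\sum_(i <- r | P i) 1) * \sum_(i <- r | P i) y i ^+ 2
         - (\sum_(i <- r | P i) y i) ^+ 2).
  under eq_bigr => i _.
    have -> : \sum_(j <- r | P j) (y i - y j) ^+ 2 =
        y i ^+ 2 * \sum_(j <- r | P j) 1 + \sum_(j <- r | P j) y j ^+ 2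
        - 2 * (y i * \sum_(j <- r | P j) y j).
      rewrite !mulr_sumr -!big_split -sumrN -big_split /=.
      by apply: eq_bigr => j _; rewrite mulr1; ring.
  over.
  rewrite !big_split /= sumrN -!mulr_suml -mulr_sumr -mulr_suml.
  have -> : \sum_(i <- r | P i) \sum_(j <- r | P j) y j ^+ 2 =
      (\sum_(i <- r | P i) 1) * \sum_(j <- r | P j) y j ^+ 2.
    by rewrite mulr_suml; apply: eq_bigr => i _; rewrite mul1r.
  ring.
have : 0 <= \sum_(i <- r | P i) \sum_(j <- r | P j) (y i - y j) ^+ 2.
  by do 2![apply: sumr_ge0 => ? _]; exact: sqr_ge0.
by rewrite pair_sum pmulr_rge0 // subr_ge0.
Qed.

End SumOfSquares.

Section LaplacianQuadForm.
Variables (R : realType) (n : nat).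
Implicit Types (A : 'M[R]_n) (x : 'cV[R]_n) (e : rel 'I_n).

Definition quad_form A x : R := (x^T *m A *m x) 0 0.

Lemma quad_formE A x : quad_form A x = \sum_i \sum_j x i 0 * A i j * x j 0.
Proof.
rewrite /quad_form mxE exchange_big /=; apply: eq_bigr => j _.
by rewrite mxE big_distrl /=; apply: eq_bigr => i _; rewrite mxE.
Qed.

Lemma quad_formZ a A x : quad_form (a *: A) x = a * quad_form A x.
Proof. by rewrite /quad_form -scalemxAr -scalemxAl mxE. Qed.

Lemma laplacian_quad_form e (w : 'I_n -> 'I_n -> R) x :
  symmetric e -> irreflexive e -> (forall i j, w i j = w j i) ->
  2 * quad_form (laplacian e w) x =
  \sum_i \sum_j (if e i j then w i j * (x i 0 - x j 0) ^+ 2 else 0).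
Proof.
move=> e_sym e_irr w_sym; set y := fun i => x i 0.
pose h i j := if e i j then w i j * (y i ^+ 2 - y i * y j) else 0.
have row_sum i : \sum_j y i * laplacian e w i j * y j = \sum_j h i j.
  have -> : \sum_j h i j = y i ^+ 2 * (\sum_(k | e i k) w i k)
      - \sum_j (if e i j then w i j * (y i * y j) else 0).
    rewrite mulr_sumr [X in _ = X - _]big_mkcond -sumrB; apply: eq_bigr => j _.
    by rewrite /h; case: (e i j); rewrite ?subr0 //; ring.
  rewrite (bigD1 i) //= [X in _ - X](bigD1 i) //= e_irr add0r mxE eqxx -sumrN.
  congr (_ + _); first ring.
  apply: eq_bigr => j ji; rewrite mxE eq_sym (negbTE ji).
  by case: (e i j); rewrite ?mulr0 ?mul0r ?oppr0 //; ring.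
have h_swap : \sum_i \sum_j h j i = \sum_i \sum_j h i j.
  by rewrite exchange_big.
rewrite quad_formE (eq_bigr _ (fun i _ => row_sum i)) mulr2n mulrDl mul1r.
rewrite -{1}h_swap -big_split /=; apply: eq_bigr => i _.
rewrite -big_split /=; apply: eq_bigr => j _.
by rewrite /h (e_sym j i) (w_sym j i); case: (e i j); rewrite ?addr0 // /y; ring.
Qed.

Lemma laplacian_psd e (w : 'I_n -> 'I_n -> R) x :
  symmetric e -> irreflexive e -> (forall i j, w i j = w j i) ->
  (forall i j, e i j -> 0 <= w i j) -> 0 <= quad_form (laplacian e w) x.
Proof.
move=> e_sym e_irr w_sym w_ge0.
rewrite -(pmulr_rge0 _ (ltr0Sn _ 1)) laplacian_quad_form //.
do 2![apply: sumr_ge0 => ? _]; case: ifP => // eij.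
by rewrite mulr_ge0 ?w_ge0 ?sqr_ge0.
Qed.

Lemma double_sum_delta (f : 'I_n -> 'I_n -> R) a b :
  \sum_i \sum_j (if (i == a) && (j == b) then f i j else 0) = f a b.
Proof.
rewrite (bigD1 a) //= [X in _ + X]big1 => [|i /negbTE ->]; last exact: big1.
rewrite addr0 (bigD1 b) //= !eqxx [X in _ + X]big1 ?addr0 // => j /negbTE ->.
by rewrite andbF.
Qed.

End LaplacianQuadForm.

Definition add_edge (T : eqType) (e : rel T) (u v : T) : rel T :=
  fun i j => e i j || (i == u) && (j == v) || (i == v) && (j == u).

Section AddEdge.
Variables (R : realType) (n : nat) (e : rel 'I_n) (u v : 'I_n).
Hypotheses (e_sym : symmetric e) (e_irr : irreflexive e).
Hypotheses (uv : u != v) (e_uv : ~~ e u v).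

Lemma add_edge_simple : simple_graph (add_edge e u v).
Proof.
split=> [i j|i]; rewrite /add_edge.
  by rewrite e_sym -orbA [X in _ || X]orbC !orbA (andbC (j == u)) (andbC (j == v)).
rewrite e_irr /=; apply/negbTE/negP => /orP[]/andP[/eqP-> /eqP uv_eq];
  by move: uv; rewrite uv_eq eqxx.
Qed.

Lemma sum_add_edge (f : 'I_n -> 'I_n -> R) :
  \sum_i \sum_j (if add_edge e u v i j then f i j else 0) =
  \sum_i \sum_j (if e i j then f i j else 0) + f u v + f v u.
Proof.
rewrite -(double_sum_delta f u v) -(double_sum_delta f v u) -!big_split /=.
apply: eq_bigr => i _; rewrite -!big_split /=; apply: eq_bigr => j _.
rewrite /add_edge.
case eij: (e i j); case: andP => [[/eqP iu /eqP jv]|_];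
  case: andP => [[/eqP iv /eqP ju]|_]; rewrite /= ?addr0 ?add0r //.
- by move: uv; rewrite -iu -iv eqxx.
- by move: e_uv; rewrite -iu -jv eij.
- by move: e_uv; rewrite e_sym -iv -ju eij.
- by move: uv; rewrite -iu -iv eqxx.
Qed.

Lemma quad_form_add_edge (x : 'cV[R]_n) :
  quad_form (laplacian (add_edge e u v) (fun _ _ => 1)) x =
  quad_form (laplacian e (fun _ _ => 1)) x + (x u 0 - x v 0) ^+ 2.
Proof.
have [add_sym add_irr] := add_edge_simple.
have := @laplacian_quad_form R n _ (fun _ _ => 1) x add_sym add_irr (fun _ _ => erefl).
rewrite (sum_add_edge (fun i j => 1 * (x i 0 - x j 0) ^+ 2)).
rewrite -laplacian_quad_form // -[(x v 0 - x u 0) ^+ 2]sqrrN opprB.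
lra.
Qed.

Lemma add_edge_sparsifier (eps : R) : 0 < eps ->
  (forall x : 'cV[R]_n,
     (x u 0 - x v 0) ^+ 2 <= eps * quad_form (laplacian e (fun _ _ => 1)) x) ->
  spectral_sparsifier eps (add_edge e u v) e (fun _ _ => 1).
Proof.
move=> eps_gt0 edge_le; split=> //.
- by move=> i j eij; rewrite /add_edge eij.
split=> x; rewrite -[leLHS]/(quad_form _ x) -[leRHS]/(quad_form _ x);
  rewrite quad_formZ quad_form_add_edge.
  have := @laplacian_psd R n _ (fun _ _ => 1) x e_sym e_irr
    (fun _ _ => erefl) (fun _ _ _ => ler01).
  have := sqr_ge0 (x u 0 - x v 0); nra.
by have := edge_le x; lra.
Qed.
End AddEdge.

Section Distance.
Variables (R : realType) (T : finType) (e : rel T).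

Lemma walk_potential (f : T -> nat) :
  (forall a b, e a b -> (f b <= (f a).+1)%N) ->
  forall k a b, walk e k a b -> (f b <= f a + k)%N.
Proof.
move=> f_step; elim=> [|k IHk] a b /=; first by move/eqP->; rewrite addn0.
case/existsP=> c /andP[/f_step fc /IHk fb].
by rewrite addnS; apply: leq_trans fb _; rewrite -addSn leq_add2r.
Qed.

Lemma dist_ge_walk a b (r : \bar R) :
  (forall k, walk e k a b -> (r <= (k%:R)%:E)%E) -> (r <= dist R e a b)%E.
Proof.
rewrite /dist => r_le; case walks: [seq k <- _ | _] => [|k s]; first exact: leey.
have : k \in [seq k <- iota 0 #|T| | walk e k a b] by rewrite walks mem_head.
by rewrite mem_filter => /andP[/r_le].
Qed.

Lemma dist_adj a b : e a b -> a != b -> dist R e a b = 1%:E.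
Proof.
move=> eab ab; have : (1 < #|T|)%N by apply/card_gt1P; exists a, b.
rewrite /dist; case: #|T| => [|[|N]] //= _.
by rewrite (negbTE ab); case: existsP => // -[]; exists b; rewrite eab eqxx.
Qed.

End Distance.

Section LayeredGraph.
Variables (R : realType) (n m L : nat).
Hypotheses (m_gt0 : (0 < m)%N) (L_ge2 : (2 <= L)%N) (layers_fit : (L.+1 * m <= n)%N).

(* Vertex i lies in layer i / m; the vertices of layers beyond L are isolated. *)
Definition layer (i : 'I_n) := (i %/ m)%N.

Definition layered : rel 'I_n := fun i j =>
  ((layer i).+1 == layer j) && (layer j <= L)%N ||
  ((layer j).+1 == layer i) && (layer i <= L)%N.

Lemma source_lt : (0 < n)%N.
Proof. by apply: leq_trans layers_fit; rewrite muln_gt0. Qed.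

Lemma sink_lt : (L * m < n)%N.
Proof. by apply: leq_trans layers_fit; rewrite mulSn addnC -addn1 leq_add2l. Qed.

Definition source : 'I_n := Ordinal source_lt.
Definition sink : 'I_n := Ordinal sink_lt.

Lemma layer_source : layer source = 0%N.
Proof. by rewrite /layer div0n. Qed.

Lemma layer_sink : layer sink = L.
Proof. by rewrite /layer mulnK. Qed.

Lemma layered_sym : symmetric layered.
Proof. by move=> i j; rewrite /layered orbC. Qed.

Lemma layered_irr : irreflexive layered.
Proof. by move=> i; rewrite /layered eqn_leq ltnn. Qed.

Lemma source_neq_sink : source != sink.
Proof. by apply/eqP => /(congr1 layer); rewrite layer_source layer_sink; lia. Qed.

Lemma layered_source_sink : ~~ layered source sink.
Proof. by rewrite /layered layer_source layer_sink; apply/negP; lia. Qed.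

Lemma layered_walk k : walk layered k source sink -> (L <= k)%N.
Proof.
have step a b : layered a b -> (layer b <= (layer a).+1)%N.
  by case/orP=> /andP[/eqP <- _] //; apply: leqW; rewrite ltnW.
by move/(walk_potential step); rewrite layer_source layer_sink.
Qed.

Lemma card_layer l : (l <= L)%N -> \sum_(i | layer i == l) (1 : R) = m%:R.
Proof.
move=> l_le; have block_fit : (l * m + m <= n)%N.
  by apply: leq_trans layers_fit; rewrite -mulSnr leq_mul2r ltnS l_le orbT.
have layerE i : (i %/ m == l)%N = (true && (i < l * m + m)%N) && (l * m <= i)%N.
  by rewrite eqn_leq -ltnS ltn_divLR // leq_divRL // mulSn addnC.
rewrite -(big_mkord (fun i => i %/ m == l)%N (fun _ => (1:R))) (eq_bigl _ _ layerE).
rewrite -big_nat_widenl // -big_nat_widen //.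
by rewrite sumr_const_nat addKn.
Qed.

Section Resistance.
Variable y : 'I_n -> R.

Let gap a b := (y a - y b) ^+ 2.
Let layer_sum l := \sum_(i | layer i == l) y i.
Let cross_energy l := \sum_(a | layer a == l) \sum_(b | layer b == l.+1) gap a b.
Let energy := \sum_a \sum_b (if layered a b then gap a b else 0).

Let gap_ge0 a b : 0 <= gap a b. Proof. exact: sqr_ge0. Qed.

Let cross_energy_ge0 l : 0 <= cross_energy l.
Proof. by do 2![apply: sumr_ge0 => ? _]. Qed.

Lemma layer_dev_le a l : (l <= L)%N ->
  (m%:R * y a - layer_sum l) ^+ 2 <= m%:R * \sum_(b | layer b == l) gap a b.
Proof.
move=> l_le; have card := card_layer l_le.
rewrite -[in m%:R * y a]card mulr_suml -sumrB -[in X in _ <= X * _]card.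
under eq_bigr do rewrite mul1r.
exact: sqr_sum_le.
Qed.

Lemma layer_gap_le l : (l < L)%N ->
  (layer_sum l - layer_sum l.+1) ^+ 2 <= cross_energy l.
Proof.
move=> l_lt; have m2_gt0 : 0 < (m%:R : R) ^+ 2 by rewrite exprn_gt0 ?ltr0n.
rewrite -(ler_pM2l m2_gt0) -exprMn.
have -> : m%:R * (layer_sum l - layer_sum l.+1) =
    \sum_(a | layer a == l) (m%:R * y a - layer_sum l.+1).
  rewrite sumrB -mulr_sumr mulrBr; congr (_ - _).
  by rewrite -(card_layer (ltnW l_lt)) mulr_suml; under eq_bigr do rewrite mul1r.
apply: le_trans (sqr_sum_le _ _ _) _.
rewrite card_layer ?(ltnW l_lt) // expr2 -mulrA ler_wpM2l ?ler0n //.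
by rewrite mulr_sumr ler_sum // => a _; exact: layer_dev_le.
Qed.

Lemma cross_energy_le : \sum_(0 <= l < L) cross_energy l <= energy.
Proof.
have -> : \sum_(0 <= l < L) cross_energy l = \sum_a
    (if (layer a < L)%N then \sum_(b | layer b == (layer a).+1) gap a b else 0).
  rewrite /cross_energy; under eq_bigr do rewrite big_mkcond /=.
  rewrite exchange_big /=; apply: eq_bigr => a _.
  by rewrite -big_mkcond (eq_bigl _ _ (fun l => eq_sym _ _)) big_nat1_eq.
apply: ler_sum => a _; case: ifP => a_lt; last by rewrite sumr_ge0 // => b _; case: ifP.
rewrite [leLHS]big_mkcond; apply: ler_sum => b _; case: eqP => [b_next|_].
  by rewrite /layered b_next eqxx a_lt.
by case: ifP.
Qed.

Lemma layered_resistance :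
  (m%:R) ^+ 2 * (y source - y sink) ^+ 2 <= 3 * (m + L)%:R * energy.
Proof.
have L1_le : (L.-1 <= L)%N by exact: leq_pred.
set a := m%:R * y source - layer_sum 1.
set b := layer_sum 1 - layer_sum L.-1.
set c := layer_sum L.-1 - m%:R * y sink.
have a_le : a ^+ 2 <= m%:R * cross_energy 0.
  apply: le_trans (layer_dev_le _ (ltnW L_ge2)) _; rewrite ler_wpM2l ?ler0n //.
  rewrite /cross_energy [leRHS](bigD1 source) ?layer_source //= lerDl.
  by apply: sumr_ge0 => ? _; exact: sumr_ge0.
have c_le : c ^+ 2 <= m%:R * cross_energy L.-1.
  rewrite /c -sqrrN opprB; apply: le_trans (layer_dev_le _ L1_le) _.
  rewrite ler_wpM2l ?ler0n // /cross_energy; apply: ler_sum => i _.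
  rewrite (bigD1 sink) /= ?layer_sink ?prednK ?(ltnW L_ge2) //.
  have -> : gap sink i = gap i sink by rewrite /gap -sqrrN opprB.
  by rewrite lerDl sumr_ge0.
have b_le : b ^+ 2 <= (L.-2)%:R * \sum_(1 <= l < L.-1) cross_energy l.
  have -> : b = \sum_(1 <= l < L.-1) (layer_sum l - layer_sum l.+1).
    rewrite /b -opprB -telescope_sumr; last lia.
    by rewrite -sumrN; apply: eq_bigr => l _; rewrite opprB.
  apply: le_trans (sqr_sum_le _ _ _) _.
  rewrite sumr_const_nat -mulr_natl mulr1 subn1 ler_wpM2l ?ler0n //.
  by apply: ler_sum_nat => l /andP[_ l_lt]; apply: layer_gap_le; lia.
have cross_split : \sum_(0 <= l < L) cross_energy l =
    cross_energy 0 + \sum_(1 <= l < L.-1) cross_energy l + cross_energy L.-1.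
  rewrite -(prednK (ltnW L_ge2)) big_nat_recr //= big_ltn ?prednK //; lia.
have abc : m%:R * (y source - y sink) = a + b + c by rewrite /a /b /c; ring.
rewrite -exprMn abc.
have := cross_energy_le; rewrite cross_split => cross_le.
have sum3 : (a + b + c) ^+ 2 <= 3 * (a ^+ 2 + b ^+ 2 + c ^+ 2).
  by have := sqr_ge0 (a - b); have := sqr_ge0 (b - c); have := sqr_ge0 (a - c); nra.
have mid_ge0 : 0 <= \sum_(1 <= l < L.-1) cross_energy l by exact: sumr_ge0.
set M : R := (m + L)%:R.
have m_le : m%:R <= M by rewrite ler_nat leq_addr.
have L2_le : (L.-2)%:R <= M by rewrite ler_nat; lia.
have := ler_wpM2r (cross_energy_ge0 0%N) m_le; have := ler_wpM2r (cross_energy_ge0 L.-1) m_le.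
have := ler_wpM2r mid_ge0 L2_le; have := ler_wpM2l (ler0n _ (m + L)) cross_le.
rewrite -/M; lra.
Qed.

End Resistance.

Lemma source_sink_gap_le (x : 'cV[R]_n) :
  (m%:R) ^+ 2 * (x source 0 - x sink 0) ^+ 2 <=
  6 * (m + L)%:R * quad_form (laplacian layered (fun _ _ => 1)) x.
Proof.
apply: le_trans (layered_resistance (fun i => x i 0)) _.
have := @laplacian_quad_form R n layered (fun _ _ => 1) x layered_sym layered_irr
  (fun _ _ => erefl).
under eq_bigr do under eq_bigr do rewrite mul1r.
move=> <-; lra.
Qed.

Lemma layered_add_edge_stretch (eps : R) :
  0 < eps -> 6 * (m + L)%:R <= eps * (m%:R) ^+ 2 ->
  let G := add_edge layered source sink in
  [/\ simple_graph G, spectral_sparsifier eps G layered (fun _ _ => 1),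
      dist R G source sink = 1%:E &
      ((L%:R)%:E <= dist R layered source sink)%E].
Proof.
move=> eps_gt0 eps_large G.
have [G_sym G_irr] := add_edge_simple layered_sym layered_irr source_neq_sink.
split=> //.
- apply: (add_edge_sparsifier layered_sym layered_irr source_neq_sink
    layered_source_sink eps_gt0) => x.
  have m2_gt0 : 0 < (m%:R : R) ^+ 2 by rewrite exprn_gt0 ?ltr0n.
  rewrite -(ler_pM2l m2_gt0); apply: le_trans (source_sink_gap_le x) _.
  rewrite mulrA ler_wpM2r ?(mulrC _ eps) //.
  by apply: laplacian_psd => //; [exact: layered_sym | exact: layered_irr].
- by apply: dist_adj source_neq_sink; rewrite /G /add_edge !eqxx orbT.
by apply: dist_ge_walk => k /layered_walk; rewrite lee_fin ler_nat.
Qed.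

End LayeredGraph.

Lemma cube_root_bracket (a n : nat) : (0 < a)%N -> (16 * a <= n)%N ->
  exists2 t, (2 <= t)%N & (2 * a * t ^ 3 <= n <= 16 * a * t ^ 3)%N.
Proof.
move=> a_gt0 n_ge; pose fits t := (2 * a * t ^ 3 <= n)%N.
have fits2 : fits 2 by rewrite /fits; lia.
have fits_le t : fits t -> (t <= n)%N by rewrite /fits; nia.
have [t fits_t t_max] := ex_maxnP (ex_intro _ 2%N fits2) fits_le.
have t_ge2 := t_max _ fits2.
exists t => //; apply/andP; split=> //.
have : ~~ fits t.+1 by apply/negP => /t_max; rewrite ltnn.
by rewrite /fits -ltnNge; nia.
Qed.

Lemma pow_two_thirds_le (R : realType) (x a t : R) :
  0 <= x -> 1 <= a -> 0 <= t -> x <= 16 * a * t ^+ 3 ->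
  x `^ (2 / 3) <= 8 * a * t ^+ 2.
Proof.
move=> x_ge0 a_ge1 t_ge0 x_le.
have a_ge0 : 0 <= a by exact: le_trans ler01 a_ge1.
have cube : (x `^ (2 / 3)) ^+ 3 = x ^+ 2.
  rewrite -powR_mulrn ?powR_ge0 // -powRrM.
  have -> : (2 / 3 * 3%:R : R) = 2%:R by field.
  by rewrite powR_mulrn.
rewrite -(@ler_pXn2r _ 3) // ?nnegrE ?powR_ge0 ?mulr_ge0 ?exprn_ge0 // cube.
apply: le_trans (_ : (16 * a * t ^+ 3) ^+ 2 <= _).
  by rewrite ler_pXn2r // nnegrE // !mulr_ge0 ?exprn_ge0.
rewrite -subr_ge0.
have -> : (8 * a * t ^+ 2) ^+ 3 - (16 * a * t ^+ 3) ^+ 2 =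
    (a - 1/2) * (512 * a ^+ 2 * t ^+ 6) by field.
apply: mulr_ge0; last by rewrite !mulr_ge0 ?exprn_ge0.
by rewrite subr_ge0; lra.
Qed.

Lemma sparsity_condition (R : realType) (eps : R) (a t : nat) :
  (0 < a)%N -> (0 < t)%N -> 12 <= eps * a%:R ->
  6 * (a * t + t ^ 2)%:R <= eps * ((a * t)%:R) ^+ 2.
Proof.
move=> a_gt0 t_gt0 a_large.
have : (a * t + t ^ 2 <= 2 * a * t ^ 2)%N by nia.
rewrite -(ler_nat R) => /(ler_wpM2l (ler0n R 6)).
move/le_trans; apply; rewrite !natrM.
have at2_ge0 : 0 <= a%:R * t%:R ^+ 2 :> R by rewrite mulr_ge0 ?exprn_ge0.
by have := ler_wpM2r at2_ge0 a_large; lra.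
Qed.

Theorem lemma4p4 (R : realType) (eps : R) : 0 < eps ->
  exists (c : R) (k N : nat), 0 < c /\
  forall n : nat, (N <= n)%N ->
  exists (G EH : rel 'I_n) (w : 'I_n -> 'I_n -> R),
    [/\ simple_graph G,
        spectral_sparsifier eps G EH w &
        exists u v : 'I_n,
          [/\ u != v, (dist R G u v < +oo)%E &
              ((c * (n%:R `^ (2 / 3)) / (ln (n%:R : R)) ^+ k)%:E
                 * dist R G u v <= dist R EH u v)%E]].
Proof.
move=> eps_gt0.
have [A A_gt0 A_large] : exists2 A : nat, (0 < A)%N & 12 <= eps * A%:R.
  have ratio_ge0 : 0 <= 12 / eps by rewrite divr_ge0 ?ltW.
  have A_gt := archi_boundP ratio_ge0.
  exists (Num.Def.archi_bound (12 / eps)).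
    by rewrite -(ltr_nat R); apply: le_lt_trans A_gt.
  by rewrite mulrC -ler_pdivrMr // ltW.
exists (8 * A%:R)^-1, 0%N, (16 * A)%N; split; first by rewrite invr_gt0 mulr_gt0 ?ltr0n.
move=> n n_ge; have [t t_ge2 /andP[n_lo n_hi]] := cube_root_bracket A_gt0 n_ge.
have At_gt0 : (0 < A * t)%N by rewrite muln_gt0 A_gt0; lia.
have t2_ge2 : (2 <= t ^ 2)%N by nia.
have layers_fit : ((t ^ 2).+1 * (A * t) <= n)%N by apply: leq_trans n_lo; nia.
have eps_large := sparsity_condition A_gt0 (ltnW t_ge2) A_large.
have [G_simple G_sparse dist_G dist_K] :=
  layered_add_edge_stretch At_gt0 t2_ge2 layers_fit eps_gt0 eps_large.
do 3!eexists; split; [exact: G_simple | exact: G_sparse |].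
exists (source At_gt0 layers_fit), (sink At_gt0 layers_fit).
split; [exact: source_neq_sink | by rewrite dist_G ltry |].
rewrite dist_G mule1 expr0 divr1; apply: le_trans dist_K; rewrite lee_fin.
rewrite natrX ler_pdivrMl ?mulr_gt0 ?ltr0n //.
by apply: pow_two_thirds_le; rewrite ?ler0n ?ler1n // -natrX -!natrM ler_nat.
Qed.
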